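(* Let $\mathcal R$ be a CCTRS, let $\rho\colon \ell\to r\Leftarrow c$ be a rule of $\mathcal R$, and let $s$ be an instance of $\ell$. Suppose $s\to_{\mathcal R}^* t$ using only steps at non-root positions, and suppose $t\to_{\mathcal R} u$ by a step with rule $\rho$ at the root position. Then there exists a term $v$ such that $s\to_{\mathcal R} v$ by a step with rule $\rho$ at the root position and $v\to_{\mathcal R}^* u$.
   Context: Terms are built from a signature $\mathcal F$ and variables $\mathcal V$. An (oriented) conditional rewrite rule has the form $\ell\to r\Leftarrow a_1\approx b_1,\dots,a_k\approx b_k$ with $k\ge 0$. For a set $\mathcal R$ of such rules, $\to_{\mathcal R}=\bigcup_{i}\to_{\mathcal R_i}$ where $\mathcal R_0=\emptyset$ and $\mathcal R_{i+1}=\{\ell\sigma\to r\sigma\mid (\ell\to r\Leftarrow c)\in\mathcal R,\ a_j\sigma\to^*_{\mathcal R_i}b_j\sigma \text{ for all } j\}$; equivalently $s\to t$ iff there are a position $p$, a rule and a substitution $\sigma$ with $s|_p=\ell\sigma$, $t=s[r\sigma]_p$ and $a_j\sigma\to^*b_j\sigma$ for all $j$ (written $\mathcal R\vdash c\sigma$). Defined symbols are the root symbols of left-hand sides; all other symbols are constructors; constructor terms contain only constructors and variables. A CCTRS is such a system in which every rule has the form $f(\ell_1,\dots,\ell_n)\to r\Leftarrow a_1\approx b_1,\dots,a_k\approx b_k$ where $\ell_1,\dots,\ell_n,b_1,\dots,b_k$ are constructor terms, the terms $f(\ell_1,\dots,\ell_n),b_1,\dots,b_k$ pairwise have no common variables,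 $\mathrm{Var}(r)\subseteq\mathrm{Var}(\ell_1,\dots,\ell_n,b_1,\dots,b_k)$, and $\mathrm{Var}(a_i)\subseteq\mathrm{Var}(\ell_1,\dots,\ell_n,b_1,\dots,b_{i-1})$ for all $1\le i\le k$. *)

From Stdlib Require Import List Relations.
Import ListNotations.
Set Implicit Arguments.

Section Terms.
Variables F V : Type.

(* Terms over function symbols F and variables V (argument lists are
   unconstrained, i.e. symbols may be used with any number of arguments). *)
Inductive term : Type :=
| Var : V -> term
| Fun : F -> list term -> term.

Fixpoint subst (sigma : V -> term) (t : term) : term :=
  match t with
  | Var x => sigma x
  | Fun f ts => Fun f (map (subst sigma) ts)
  end.

Fixpoint vars (t : term) : list V :=
  match t with
  | Var x => [x]
  | Fun f ts => flat_map vars ts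
  end.

Fixpoint funs (t : term) : list F :=
  match t with
  | Var _ => []
  | Fun f ts => f :: flat_map funs ts
  end.

(* Positions are lists of (0-based) argument indices; [] is the root. *)
Fixpoint subterm_at (t : term) (p : list nat) : option term :=
  match p with
  | [] => Some t
  | i :: p' =>
      match t with
      | Var _ => None
      | Fun f ts =>
          match nth_error ts i with
          | Some ti => subterm_at ti p'
          | None => None
          end
      end
  end.

Fixpoint replace_at (t : term) (p : list nat) (u : term) : term :=
  match p with
  | [] => u
  | i :: p' =>
      match t with
      | Var _ => t
      | Fun f ts =>
          match nth_error ts i with
          | Some ti => Fun f (firstn i ts ++ replace_at ti p' u :: skipn (S i) ts)
          | None => t
          end
      end
  end.

Record rule : Type := mkRule {
  lhs : term;
  rhs : term;
  conds : list (term * term)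
}.

Definition step_with (Q : relation term) (R : rule -> Prop) (p : list nat)
  (rho : rule) (s t : term) : Prop :=
  R rho /\
  exists sigma : V -> term,
    subterm_at s p = Some (subst sigma (lhs rho)) /\
    t = replace_at s p (subst sigma (rhs rho)) /\
    (forall a b, In (a, b) (conds rho) -> Q (subst sigma a) (subst sigma b)).

Fixpoint step_n (R : rule -> Prop) (n : nat) (s t : term) : Prop :=
  match n with
  | 0 => False
  | S n' => exists p rho, step_with (clos_refl_trans term (step_n R n')) R p rho s t
  end.

Definition step_at (R : rule -> Prop) (p : list nat) (rho : rule) (s t : term) : Prop :=
  exists n, step_with (clos_refl_trans term (step_n R n)) R p rho s t.

Definition step (R : rule -> Prop) (s t : term) : Prop :=
  exists p rho, step_at R p rho s t.

Definition nonroot_step (R : rule -> Prop) (s t : term) : Prop :=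
  exists p rho, p <> [] /\ step_at R p rho s t.

Definition defined (R : rule -> Prop) (f : F) : Prop :=
  exists rho ts, R rho /\ lhs rho = Fun f ts.

Definition constructor_term (R : rule -> Prop) (t : term) : Prop :=
  forall f, In f (funs t) -> ~ defined R f.

Definition pairwise_var_disjoint (L : list term) : Prop :=
  forall i j ti tj, i <> j -> nth_error L i = Some ti -> nth_error L j = Some tj ->
    forall x, In x (vars ti) -> ~ In x (vars tj).

Definition CCTRS (R : rule -> Prop) : Prop :=
  forall rho, R rho ->
    exists f ls,
      lhs rho = Fun f ls /\
      Forall (constructor_term R) ls /\
      Forall (constructor_term R) (map snd (conds rho)) /\
      pairwise_var_disjoint (lhs rho :: map snd (conds rho)) /\
      incl (vars (rhs rho))
           (flat_map vars ls ++ flat_map vars (map snd (conds rho))) /\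
      (forall i a b, nth_error (conds rho) i = Some (a, b) ->
         incl (vars a)
              (flat_map vars ls ++ flat_map vars (map snd (firstn i (conds rho))))).

End Terms.

Arguments Var {F V} _.
Arguments Fun {F V} _ _.

(* Write s = l sigma with l = f(l1, ..., ln).  Every redex has a defined symbol
   at its root, whereas the li are constructor terms, so a non-root reduction
   never rewrites at a position of the pattern l: the reduct t keeps the shape
   of l and each occurrence of a variable x has been replaced by some reduct of
   x sigma.  If t = l tau, this gives x sigma ->* x tau for every x in l.
   Let sigma' agree with sigma on the variables of l and with tau elsewhere.
   Then s = l sigma', and sigma' ->* tau pointwise, so
   a sigma' ->* a tau ->* b tau = b sigma' for each condition a ~ b (b shares no
   variable with l), hence s -> r sigma' at the root, and r sigma' ->* r tau = u. *)

From Stdlib Require Import List Relations Lia ClassicalEpsilon.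
Import ListNotations.
Set Implicit Arguments.

Lemma clos_rt_mono (A : Type) (r1 r2 : relation A) :
  inclusion A r1 r2 -> inclusion A (clos_refl_trans A r1) (clos_refl_trans A r2).
Proof. intros H a b Hr; induction Hr; eauto using rt_step, rt_refl, rt_trans. Qed.

Lemma app_cons_split (A : Type) (pre post : list A) (a : A) :
  nth_error (pre ++ a :: post) (length pre) = Some a /\
  firstn (length pre) (pre ++ a :: post) = pre /\
  skipn (S (length pre)) (pre ++ a :: post) = post.
Proof.
  induction pre as [|b pre IH]; [auto|].
  destruct IH as (H1 & H2 & H3). cbn - [skipn]. rewrite H1, H2. auto.
Qed.

Lemma Forall2_update_middle (A B : Type) (P : A -> B -> Prop) ls pre b b' post :
  Forall2 P ls (pre ++ b :: post) -> (forall a, In a ls -> P a b -> P a b') ->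
  Forall2 P ls (pre ++ b' :: post).
Proof.
  intros H Hb. apply Forall2_app_inv_r in H as (l1 & l2 & H1 & H2 & ->).
  inversion H2; subst. apply Forall2_app; [exact H1|].
  constructor; [|assumption]. apply Hb; [apply in_or_app; right; left|]; auto.
Qed.

Section Rewriting.
Variables F V : Type.
Variable R : rule F V -> Prop.
Notation term := (term F V).
Notation rt := (clos_refl_trans term).

Lemma term_nested_ind (P : term -> Prop) :
  (forall x, P (Var x)) ->
  (forall f ts, Forall P ts -> P (Fun f ts)) -> forall t, P t.
Proof.
  intros HV HF.
  refine (fix IH t := match t with Var x => HV x | Fun f ts => HF f ts
    ((fix go l := match l return Forall P l with [] => Forall_nil _
       | a :: l' => Forall_cons _ (IH a) (go l') end) ts) end).
Qed.

Lemma subst_ext_in (sg tau : V -> term) t :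
  (forall x, In x (vars t) -> sg x = tau x) -> subst sg t = subst tau t.
Proof.
  induction t as [x|f ts IH] using term_nested_ind; intros H; simpl.
  - apply H; simpl; auto.
  - f_equal. apply map_ext_in. intros ti Hti. rewrite Forall_forall in IH.
    apply IH; auto. intros x Hx; apply H. apply in_flat_map. eauto.
Qed.

Lemma step_n_mono n m : n <= m -> inclusion term (step_n R n) (step_n R m).
Proof.
  revert m; induction n as [|n IH]; intros m Hle a b H; [destruct H|].
  destruct m as [|m]; [lia|]. destruct H as (p & rho & HR & sg & Hl & Hr & Hc).
  exists p, rho. split; [exact HR|]. exists sg. repeat split; auto.
  intros x y Hxy. apply clos_rt_mono with (step_n R n); auto.
  apply IH. lia.
Qed.

Lemma step_n_step n : inclusion term (step_n R n) (step R).
Proof.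
  intros a b H. destruct n as [|n]; [destruct H|].
  destruct H as (p & rho & Hs). exists p, rho, n. exact Hs.
Qed.

Lemma rt_step_level a b : rt (step R) a b -> exists n, rt (step_n R n) a b.
Proof.
  induction 1 as [x y (p & rho & n & Hs)| x | x y z _ (n1 & H1) _ (n2 & H2)].
  - exists (S n). apply rt_step. exists p, rho. exact Hs.
  - exists 0. apply rt_refl.
  - exists (max n1 n2). apply rt_trans with y.
    + revert H1. apply clos_rt_mono, step_n_mono. lia.
    + revert H2. apply clos_rt_mono, step_n_mono. lia.
Qed.

Lemma conds_common_level (cs : list (term * term)) (sg : V -> term) :
  (forall a b, In (a, b) cs -> rt (step R) (subst sg a) (subst sg b)) ->
  exists N, forall a b, In (a, b) cs -> rt (step_n R N) (subst sg a) (subst sg b).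
Proof.
  induction cs as [|[a0 b0] cs IH]; intros H.
  - exists 0. intros a b [].
  - destruct (rt_step_level (H a0 b0 (or_introl eq_refl))) as [n0 H0].
    destruct IH as [N HN]; [intros; apply H; right; auto|].
    exists (max n0 N). intros a b [E|Hin].
    + injection E as <- <-. revert H0. apply clos_rt_mono, step_n_mono. lia.
    + generalize (HN a b Hin). apply clos_rt_mono, step_n_mono. lia.
Qed.

Lemma root_step_iff rho s t :
  step_at R [] rho s t <->
  R rho /\ exists sg, s = subst sg (lhs rho) /\ t = subst sg (rhs rho) /\
    forall a b, In (a, b) (conds rho) -> rt (step R) (subst sg a) (subst sg b).
Proof.
  split.
  - intros (n & HR & sg & Hl & Hr & Hc). injection Hl as Hl.
    split; [exact HR|]. exists sg. repeat split; auto.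
    intros a b Hin. generalize (Hc a b Hin). apply clos_rt_mono, step_n_step.
  - intros (HR & sg & -> & -> & Hc).
    destruct (conds_common_level _ _ Hc) as [N HN].
    exists N. split; [exact HR|]. exists sg. auto.
Qed.

Lemma step_at_arg p rho f pre a a' post :
  step_at R p rho a a' ->
  step_at R (length pre :: p) rho (Fun f (pre ++ a :: post)) (Fun f (pre ++ a' :: post)).
Proof.
  intros (n & HR & sg & Hl & Hr & Hc). exists n. split; [exact HR|]. exists sg.
  destruct (app_cons_split pre post a) as (Hnth & Hfirst & Hskip).
  unfold subterm_at, replace_at; fold (@subterm_at F V) (@replace_at F V).
  rewrite Hnth, Hfirst, Hskip, <- Hr. auto.
Qed.

Lemma step_at_arg_inv i p rho f ts w :
  step_at R (i :: p) rho (Fun f ts) w ->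
  exists pre a a' post, ts = pre ++ a :: post /\ w = Fun f (pre ++ a' :: post) /\
    step_at R p rho a a'.
Proof.
  intros (n & HR & sg & Hl & Hr & Hc). cbn [subterm_at replace_at] in Hl, Hr.
  destruct (nth_error ts i) as [a|] eqn:Ha; [|discriminate].
  destruct (nth_error_split ts i Ha) as (pre & post & Hts & Hlen).
  destruct (app_cons_split pre post a) as (_ & Hfirst & Hskip).
  exists pre, a, (replace_at a p (subst sg (rhs rho))), post.
  rewrite Hr, Hts, <- Hlen, Hfirst, Hskip. repeat split; auto.
  exists n. split; [exact HR|]. exists sg. auto.
Qed.

Lemma rt_step_args f pre ts ts' :
  Forall2 (rt (step R)) ts ts' -> rt (step R) (Fun f (pre ++ ts)) (Fun f (pre ++ ts')).
Proof.
  intros H. revert pre. induction H as [|a a' ts ts' Ha _ IH]; intros pre; [apply rt_refl|].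
  apply rt_trans with (Fun f (pre ++ a' :: ts)).
  - induction Ha as [x y (p & rho & Hs)| x | x y z _ IH1 _ IH2].
    + apply rt_step. exists (length pre :: p), rho. apply step_at_arg, Hs.
    + apply rt_refl.
    + apply rt_trans with (Fun f (pre ++ y :: ts)); auto.
  - specialize (IH (pre ++ [a'])). rewrite <- !app_assoc in IH. exact IH.
Qed.

Lemma rt_step_subst (sg tau : V -> term) :
  (forall x, rt (step R) (sg x) (tau x)) -> forall t, rt (step R) (subst sg t) (subst tau t).
Proof.
  intros H t. induction t as [x|f ts IH] using term_nested_ind; [apply H|].
  apply (rt_step_args f []). induction IH; simpl; constructor; auto.
Qed.

Lemma constructor_term_args f ts :
  constructor_term R (Fun f ts) -> Forall (constructor_term R) ts.
Proof.
  intros H. apply Forall_forall. intros t Ht g Hg. apply H.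
  right. apply in_flat_map. eauto.
Qed.

Lemma root_step_defined_head (HC : CCTRS R) rho w w' :
  step_at R [] rho w w' -> exists g ts, w = Fun g ts /\ defined R g.
Proof.
  intros (HR & sg & -> & _)%root_step_iff.
  destruct (HC rho HR) as (g & ls & Hl & _).
  rewrite Hl. exists g, (map (subst sg) ls). split; [reflexivity|]. exists rho, ls. auto.
Qed.

Section InstanceReducts.
Variable sg : V -> term.

(* Distinct occurrences of the same variable x may be instantiated by distinct
   reducts of [sg x]: left-hand sides need not be linear. *)
Inductive inst_reduct : term -> term -> Prop :=
| inst_reduct_var x w : rt (step R) (sg x) w -> inst_reduct (Var x) w
| inst_reduct_fun f ls ts : Forall2 inst_reduct ls ts -> inst_reduct (Fun f ls) (Fun f ts).

Lemma inst_reduct_subst l : inst_reduct l (subst sg l).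
Proof.
  induction l as [x|f ls IH] using term_nested_ind; constructor.
  - apply rt_refl.
  - induction IH; constructor; auto.
Qed.

Lemma inst_reduct_arg_step f ls ts i p rho w :
  (forall l a a', In l ls -> inst_reduct l a -> step R a a' -> inst_reduct l a') ->
  inst_reduct (Fun f ls) (Fun f ts) -> step_at R (i :: p) rho (Fun f ts) w ->
  inst_reduct (Fun f ls) w.
Proof.
  intros Hargs Hf Hs. inversion Hf as [|f' ls' ts' Hls]; subst.
  destruct (step_at_arg_inv Hs) as (pre & a & a' & post & -> & -> & Ha).
  constructor. apply Forall2_update_middle with a; [exact Hls|].
  intros l Hin Hl. apply (Hargs l a a'); auto. exists p, rho. exact Ha.
Qed.

(* Steps cannot occur at a position of a constructor pattern, since the root of
   every redex is a defined symbol. *)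
Lemma inst_reduct_step (HC : CCTRS R) l :
  constructor_term R l -> forall w w', inst_reduct l w -> step R w w' -> inst_reduct l w'.
Proof.
  induction l as [x|f ls IH] using term_nested_ind; intros Hl w w' Hw (p & rho & Hs).
  - inversion Hw; subst. constructor. apply rt_trans with w; [assumption|].
    apply rt_step. exists p, rho. exact Hs.
  - inversion Hw as [|f' ls' ts Hls]; subst. destruct p as [|i p].
    + exfalso. destruct (root_step_defined_head HC Hs) as (g & ts' & E & Hd).
      injection E as <- _. apply (Hl f); [left; reflexivity|exact Hd].
    + apply inst_reduct_arg_step with ts i p rho; auto.
      intros l a a' Hin. rewrite Forall_forall in IH. apply IH; [exact Hin|].
      apply constructor_term_args in Hl. rewrite Forall_forall in Hl. auto.
Qed.

Lemma inst_reduct_nonroot_steps (HC : CCTRS R) f ls :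
  Forall (constructor_term R) ls ->
  forall w w', rt (nonroot_step R) w w' -> inst_reduct (Fun f ls) w -> inst_reduct (Fun f ls) w'.
Proof.
  intros Hls w w' H. induction H as [w w' (p & rho & Hp & Hs)| | ]; auto.
  intros Hw. destruct p as [|i p]; [contradiction|].
  inversion Hw as [|f' ls' ts Hts]; subst.
  apply inst_reduct_arg_step with ts i p rho; auto.
  intros l a a' Hl. rewrite Forall_forall in Hls. apply inst_reduct_step; auto.
Qed.

Lemma inst_reduct_subst_inv (tau : V -> term) l :
  inst_reduct l (subst tau l) -> forall x, In x (vars l) -> rt (step R) (sg x) (tau x).
Proof.
  induction l as [y|f ls IH] using term_nested_ind; intros Hl x Hx.
  - destruct Hx as [<-|[]]. inversion Hl; subst. assumption.
  - inversion Hl as [|f' ls' ts Hls]; subst.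
    apply in_flat_map in Hx as (l & Hin & Hx).
    rewrite Forall_forall in IH. apply (IH l Hin); [|exact Hx].
    clear - Hls Hin. induction ls as [|l' ls IHls]; simpl in *; [contradiction|].
    inversion Hls; subst. destruct Hin as [<-|Hin]; auto.
Qed.

End InstanceReducts.

Lemma nonroot_reduct_lhs_match (HC : CCTRS R) rho sg tau :
  R rho -> rt (nonroot_step R) (subst sg (lhs rho)) (subst tau (lhs rho)) ->
  forall x, In x (vars (lhs rho)) -> rt (step R) (sg x) (tau x).
Proof.
  intros HR Hst. apply inst_reduct_subst_inv.
  destruct (HC rho HR) as (f & ls & Hl & Hls & _). rewrite Hl in *.
  apply inst_reduct_nonroot_steps with (subst sg (Fun f ls)); auto.
  apply inst_reduct_subst.
Qed.

Lemma cctrs_cond_rhs_fresh (HC : CCTRS R) rho a b :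
  R rho -> In (a, b) (conds rho) -> forall x, In x (vars (lhs rho)) -> ~ In x (vars b).
Proof.
  intros HR Hin x Hx. destruct (HC rho HR) as (_ & _ & _ & _ & _ & Hdisj & _).
  destruct (In_nth_error _ _ Hin) as [k Hk].
  apply (Hdisj 0 (S k) (lhs rho) b); auto.
  simpl. rewrite nth_error_map, Hk. reflexivity.
Qed.

End Rewriting.

Definition subst_on (V T : Type) (xs : list V) (sg tau : V -> T) (x : V) : T :=
  if excluded_middle_informative (In x xs) then sg x else tau x.

Lemma subst_on_in F V xs (sg tau : V -> term F V) t :
  incl (vars t) xs -> subst (subst_on xs sg tau) t = subst sg t.
Proof.
  intros H. apply subst_ext_in. intros x Hx. unfold subst_on.
  destruct excluded_middle_informative as [|Hn]; [reflexivity|]. contradiction (Hn (H x Hx)).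
Qed.

Lemma subst_on_notin F V xs (sg tau : V -> term F V) t :
  (forall x, In x xs -> ~ In x (vars t)) -> subst (subst_on xs sg tau) t = subst tau t.
Proof.
  intros H. apply subst_ext_in. intros x Hx. unfold subst_on.
  destruct excluded_middle_informative as [Hin|]; [contradiction (H x Hin Hx)|reflexivity].
Qed.

Theorem lemma3p1 (F V : Type) (R : rule F V -> Prop) (rho : rule F V)
  (s t u : term F V) :
  CCTRS R ->
  R rho ->
  (exists sigma : V -> term F V, s = subst sigma (lhs rho)) ->
  clos_refl_trans (term F V) (nonroot_step R) s t ->
  step_at R [] rho t u ->
  exists v : term F V,
    step_at R [] rho s v /\ clos_refl_trans (term F V) (step R) v u.
Proof.
  intros HC HR [sg ->] Hst (_ & tau & -> & -> & Hconds)%root_step_iff.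
  set (sg' := subst_on (vars (lhs rho)) sg tau).
  assert (Hsg' : forall x, clos_refl_trans _ (step R) (sg' x) (tau x)).
  { intros x. unfold sg', subst_on. destruct excluded_middle_informative as [Hx|].
    - exact (nonroot_reduct_lhs_match HC _ _ _ HR Hst x Hx).
    - apply rt_refl. }
  exists (subst sg' (rhs rho)). split.
  - apply root_step_iff. split; [exact HR|]. exists sg'. repeat split.
    + symmetry. apply subst_on_in, incl_refl.
    + intros a b Hin.
      assert (Hb : subst sg' b = subst tau b).
      { apply subst_on_notin, (cctrs_cond_rhs_fresh HC _ _ _ HR Hin). }
      rewrite Hb.
      apply rt_trans with (subst tau a); [apply rt_step_subst, Hsg'|apply Hconds, Hin].
  - apply rt_step_subst, Hsg'.
Qed.
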